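(* For a semi-abelian category $\mathcal C$ the following are equivalent: (i) every composite of two normal monomorphisms in $\mathcal C$ is a normal monomorphism; (ii) in $\mathcal C$, every pushout of a normal monomorphism along a regular epimorphism is a monomorphism (necessarily normal).
   Context: Semi-abelian category: pointed, Barr-exact, protomodular, with binary coproducts. A normal monomorphism is a kernel of some morphism; a regular epimorphism is a coequaliser of some pair (in this context, a cokernel). *)

Set Implicit Arguments.
Set Universe Polymorphism.

Record Category := {
  Ob :> Type;
  Hom : Ob -> Ob -> Type;
  comp : forall {a b c : Ob}, Hom b c -> Hom a b -> Hom a c;
  idm : forall (a : Ob), Hom a a;
  comp_assoc : forall a b c d (f : Hom a b) (g : Hom b c) (h : Hom c d),
      comp h (comp g f) = comp (comp h g) f;
  comp_id_l : forall a b (f : Hom a b), comp (idm b) f = f;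
  comp_id_r : forall a b (f : Hom a b), comp f (idm a) = f
}.

Arguments Hom {C} : rename.
Arguments comp {C a b c} : rename.
Arguments idm {C} : rename.

Notation "g ⊚ f" := (comp g f) (at level 40, left associativity).

Section CatDefs.
Context {C : Category}.

Definition is_mono {X Y : C} (f : Hom X Y) : Prop :=
  forall (Z : C) (g h : Hom Z X), f ⊚ g = f ⊚ h -> g = h.

Definition is_iso {X Y : C} (f : Hom X Y) : Prop :=
  exists g : Hom Y X, g ⊚ f = idm X /\ f ⊚ g = idm Y.

Definition is_initial (I : C) : Prop :=
  forall X : C, exists u : Hom I X, forall v : Hom I X, v = u.
Definition is_terminal (T : C) : Prop :=
  forall X : C, exists u : Hom X T, forall v : Hom X T, v = u.
Definition is_zero_object (Z : C) : Prop := is_initial Z /\ is_terminal Z.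

Definition pointed : Prop := exists Z : C, is_zero_object Z.

Definition is_zero_mor {X Y : C} (f : Hom X Y) : Prop :=
  exists (Z : C) (u : Hom X Z) (v : Hom Z Y), is_zero_object Z /\ f = v ⊚ u.

Definition is_kernel {K X Y : C} (k : Hom K X) (f : Hom X Y) : Prop :=
  is_zero_mor (f ⊚ k) /\
  forall (W : C) (g : Hom W X), is_zero_mor (f ⊚ g) ->
    exists u : Hom W K, k ⊚ u = g /\ forall v : Hom W K, k ⊚ v = g -> v = u.

Definition is_normal_mono {K X : C} (k : Hom K X) : Prop :=
  exists (Y : C) (f : Hom X Y), is_kernel k f.

Definition is_coequalizer {A B Q : C} (f g : Hom A B) (q : Hom B Q) : Prop :=
  q ⊚ f = q ⊚ g /\
  forall (W : C) (h : Hom B W), h ⊚ f = h ⊚ g ->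
    exists u : Hom Q W, u ⊚ q = h /\ forall v : Hom Q W, v ⊚ q = h -> v = u.

Definition is_regular_epi {B Q : C} (q : Hom B Q) : Prop :=
  exists (A : C) (f g : Hom A B), is_coequalizer f g q.

(* P --p2--> B
   |p1       |g
   v         v
   A --f---> D *)
Definition is_pullback {A B D P : C} (f : Hom A D) (g : Hom B D)
    (p1 : Hom P A) (p2 : Hom P B) : Prop :=
  f ⊚ p1 = g ⊚ p2 /\
  forall (W : C) (a : Hom W A) (b : Hom W B), f ⊚ a = g ⊚ b ->
    exists u : Hom W P, (p1 ⊚ u = a /\ p2 ⊚ u = b) /\
      forall v : Hom W P, p1 ⊚ v = a /\ p2 ⊚ v = b -> v = u.

(* A --f--> B
   |g       |i2
   v        v
   D --i1-> P *)
Definition is_pushout {A B D P : C} (f : Hom A B) (g : Hom A D)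
    (i1 : Hom D P) (i2 : Hom B P) : Prop :=
  i2 ⊚ f = i1 ⊚ g /\
  forall (W : C) (b : Hom B W) (d : Hom D W), b ⊚ f = d ⊚ g ->
    exists u : Hom P W, (u ⊚ i1 = d /\ u ⊚ i2 = b) /\
      forall v : Hom P W, v ⊚ i1 = d /\ v ⊚ i2 = b -> v = u.

Definition has_terminal : Prop := exists T : C, is_terminal T.
Definition has_pullbacks : Prop :=
  forall (A B D : C) (f : Hom A D) (g : Hom B D),
    exists (P : C) (p1 : Hom P A) (p2 : Hom P B), is_pullback f g p1 p2.
Definition finitely_complete : Prop := has_terminal /\ has_pullbacks.

Definition is_kernel_pair {R X Y : C} (d1 d2 : Hom R X) (f : Hom X Y) : Prop :=
  is_pullback f f d1 d2.

Definition coequalizers_of_kernel_pairs : Prop :=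
  forall (R X Y : C) (f : Hom X Y) (d1 d2 : Hom R X), is_kernel_pair d1 d2 f ->
    exists (Q : C) (q : Hom X Q), is_coequalizer d1 d2 q.

Definition regular_epis_pullback_stable : Prop :=
  forall (A B D P : C) (f : Hom A D) (g : Hom B D) (p1 : Hom P A) (p2 : Hom P B),
    is_pullback f g p1 p2 -> is_regular_epi g -> is_regular_epi p1.

Definition regular : Prop :=
  finitely_complete /\ coequalizers_of_kernel_pairs /\ regular_epis_pullback_stable.

Definition jointly_monic {R X : C} (d1 d2 : Hom R X) : Prop :=
  forall (Z : C) (a b : Hom Z R), d1 ⊚ a = d1 ⊚ b -> d2 ⊚ a = d2 ⊚ b -> a = b.

Definition is_equivalence_relation {R X : C} (d1 d2 : Hom R X) : Prop :=
  jointly_monic d1 d2 /\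
  (exists r : Hom X R, d1 ⊚ r = idm X /\ d2 ⊚ r = idm X) /\
  (exists s : Hom R R, d1 ⊚ s = d2 /\ d2 ⊚ s = d1) /\
  (forall (P : C) (p1 p2 : Hom P R), is_pullback d2 d1 p1 p2 ->
     exists t : Hom P R, d1 ⊚ t = d1 ⊚ p1 /\ d2 ⊚ t = d2 ⊚ p2).

Definition is_effective {R X : C} (d1 d2 : Hom R X) : Prop :=
  exists (Y : C) (f : Hom X Y), is_kernel_pair d1 d2 f.

Definition barr_exact : Prop :=
  regular /\
  forall (R X : C) (d1 d2 : Hom R X),
    is_equivalence_relation d1 d2 -> is_effective d1 d2.

(* ---------- protomodularity (Bourn) ----------
   For every f : X -> Y, the change-of-base functor f^* : Pt(Y) -> Pt(X)
   along f reflects isomorphisms.  Unfolded: given points (A,p,s), (B,q,t)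
   over Y, a morphism of points h, pullbacks of p and q along f, and the
   induced comparison k between these pullbacks; if k is an isomorphism then
   so is h.  (A morphism of points is an isomorphism iff its underlying
   morphism is.) *)
Definition protomodular : Prop :=
  forall (X Y : C) (f : Hom X Y)
         (A : C) (p : Hom A Y) (s : Hom Y A)
         (B : C) (q : Hom B Y) (t : Hom Y B)
         (h : Hom A B),
    p ⊚ s = idm Y -> q ⊚ t = idm Y -> q ⊚ h = p -> h ⊚ s = t ->
    forall (PA : C) (pa1 : Hom PA X) (pa2 : Hom PA A)
           (PB : C) (pb1 : Hom PB X) (pb2 : Hom PB B)
           (k : Hom PA PB),
      is_pullback f p pa1 pa2 -> is_pullback f q pb1 pb2 ->
      pb1 ⊚ k = pa1 -> pb2 ⊚ k = h ⊚ pa2 ->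
      is_iso k -> is_iso h.

Definition is_coproduct {X Y S : C} (i1 : Hom X S) (i2 : Hom Y S) : Prop :=
  forall (W : C) (a : Hom X W) (b : Hom Y W),
    exists u : Hom S W, (u ⊚ i1 = a /\ u ⊚ i2 = b) /\
      forall v : Hom S W, v ⊚ i1 = a /\ v ⊚ i2 = b -> v = u.

Definition has_binary_coproducts : Prop :=
  forall X Y : C, exists (S : C) (i1 : Hom X S) (i2 : Hom Y S), is_coproduct i1 i2.

Definition semi_abelian : Prop :=
  pointed /\ barr_exact /\ protomodular /\ has_binary_coproducts.

End CatDefs.

Arguments pointed C : clear implicits.
Arguments has_terminal C : clear implicits.
Arguments has_pullbacks C : clear implicits.
Arguments finitely_complete C : clear implicits.
Arguments coequalizers_of_kernel_pairs C : clear implicits.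
Arguments regular_epis_pullback_stable C : clear implicits.
Arguments regular C : clear implicits.
Arguments barr_exact C : clear implicits.
Arguments protomodular C : clear implicits.
Arguments has_binary_coproducts C : clear implicits.
Arguments semi_abelian C : clear implicits.
Arguments is_initial {C} I.
Arguments is_terminal {C} T.
Arguments is_zero_object {C} Z.

Set Implicit Arguments.
Set Universe Polymorphism.

(* Two consequences of protomodularity in a pointed category drive the proof:
   a morphism with trivial kernel is a monomorphism, and every regular
   epimorphism is the cokernel of its kernel.

   (i) => (ii): let k = ker e.  The composite m ∘ k is a normal monomorphism,
   say the kernel of g; then g ∘ m kills k, so g ∘ m = d ∘ e, and d has trivial
   kernel, hence is monic.  The pushout property gives u with u ∘ m' = d, so m'
   is monic.

   (ii) => (i): let m = ker f and n = ker g, and let e be the regular epi part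
   of f.  The coequaliser q of n ∘ r1, n ∘ r2 (r1, r2 the kernel pair of f) is
   the pushout of n along e, so the comparison m' with m' ∘ e = q ∘ n is monic
   by (ii); with this one checks that n ∘ m is the kernel of q. *)

Section SemiAbelian.
Context {C : Category}.

Definition is_epi {X Y : C} (f : Hom X Y) : Prop :=
  forall (W : C) (g h : Hom Y W), g ⊚ f = h ⊚ f -> g = h.

Definition is_product {P A B : C} (p1 : Hom P A) (p2 : Hom P B) : Prop :=
  forall (W : C) (a : Hom W A) (b : Hom W B),
    exists u : Hom W P, (p1 ⊚ u = a /\ p2 ⊚ u = b) /\
      forall v : Hom W P, p1 ⊚ v = a /\ p2 ⊚ v = b -> v = u.

Definition normal_monos_compose : Prop :=
  forall (X Y Z : C) (m : Hom X Y) (n : Hom Y Z),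
    is_normal_mono m -> is_normal_mono n -> is_normal_mono (n ⊚ m).

Definition pushouts_of_normal_monos_mono : Prop :=
  forall (A B D P : C) (m : Hom A B) (e : Hom A D) (m' : Hom D P) (e' : Hom B P),
    is_normal_mono m -> is_regular_epi e -> is_pushout m e m' e' -> is_mono m'.

Lemma comp_assoc_eq {X Y Z W : C} {f : Hom X Y} {g : Hom Y Z} {h : Hom X Z} :
  g ⊚ f = h -> forall x : Hom W X, g ⊚ (f ⊚ x) = h ⊚ x.
Proof. intros E x. rewrite comp_assoc, E. reflexivity. Qed.

Lemma zero_mor_unique {X Y : C} (f g : Hom X Y) :
  is_zero_mor f -> is_zero_mor g -> f = g.
Proof.
  intros [Z [u [v [[HZi HZt] ->]]]] [Z' [u' [v' [[HZi' HZt'] ->]]]].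
  destruct (HZi Z') as [w _].
  destruct (HZi Y) as [o Ho].
  destruct (HZt' X) as [o' Ho'].
  assert (Ev : v = v' ⊚ w) by (rewrite (Ho v), (Ho (v' ⊚ w)); reflexivity).
  assert (Eu : u' = w ⊚ u) by (rewrite (Ho' u'), (Ho' (w ⊚ u)); reflexivity).
  rewrite Ev, Eu, comp_assoc. reflexivity.
Qed.

Lemma zero_mor_postcomp {X Y W : C} (f : Hom X Y) (g : Hom Y W) :
  is_zero_mor f -> is_zero_mor (g ⊚ f).
Proof.
  intros [Z [u [v [HZ ->]]]]. exists Z, u, (g ⊚ v). split; [exact HZ|]. apply comp_assoc.
Qed.

Lemma zero_mor_precomp {X Y W : C} (f : Hom X Y) (g : Hom W X) :
  is_zero_mor f -> is_zero_mor (f ⊚ g).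
Proof.
  intros [Z [u [v [HZ ->]]]]. exists Z, (u ⊚ g), v. split; [exact HZ|].
  symmetry. apply comp_assoc.
Qed.

Lemma zero_mor_to_zero_object {X Z : C} (f : Hom X Z) : is_zero_object Z -> is_zero_mor f.
Proof. intros HZ. exists Z, f, (idm Z). split; [exact HZ|]. symmetry. apply comp_id_l. Qed.

Lemma mono_comp {X Y W : C} (f : Hom X Y) (g : Hom Y W) :
  is_mono f -> is_mono g -> is_mono (g ⊚ f).
Proof. intros Hf Hg V a b E. apply Hf, Hg. rewrite !comp_assoc. exact E. Qed.

Lemma mono_of_mono_comp {X Y W : C} {f : Hom X Y} {g : Hom Y W} :
  is_mono (g ⊚ f) -> is_mono f.
Proof. intros Hgf V a b E. apply Hgf. rewrite <- !comp_assoc, E. reflexivity. Qed.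

Lemma epi_comp {X Y W : C} (f : Hom X Y) (g : Hom Y W) :
  is_epi f -> is_epi g -> is_epi (g ⊚ f).
Proof. intros Hf Hg V a b E. apply Hg, Hf. rewrite <- !comp_assoc. exact E. Qed.

Lemma kernel_mono {K X Y : C} (k : Hom K X) (f : Hom X Y) : is_kernel k f -> is_mono k.
Proof.
  intros [Hk0 Hk] Z a b E.
  destruct (Hk Z (k ⊚ b)) as [w [_ Hw]].
  { rewrite comp_assoc. apply zero_mor_precomp, Hk0. }
  rewrite (Hw a E), (Hw b eq_refl). reflexivity.
Qed.

Lemma normal_mono_mono {K X : C} (k : Hom K X) : is_normal_mono k -> is_mono k.
Proof. intros [Y [f Hk]]. exact (kernel_mono Hk). Qed.

Lemma coequalizer_epi {A B Q : C} (f g : Hom A B) (q : Hom B Q) :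
  is_coequalizer f g q -> is_epi q.
Proof.
  intros [E Hq] W a b Hab.
  destruct (Hq W (b ⊚ q)) as [u [_ Hu]].
  { rewrite <- !comp_assoc, E. reflexivity. }
  rewrite (Hu a Hab), (Hu b eq_refl). reflexivity.
Qed.

Lemma regular_epi_epi {B Q : C} (q : Hom B Q) : is_regular_epi q -> is_epi q.
Proof. intros [A [f [g Hq]]]. exact (coequalizer_epi Hq). Qed.

Lemma pullback_lift {A B D P W : C} (f : Hom A D) (g : Hom B D) (p1 : Hom P A)
  (p2 : Hom P B) (a : Hom W A) (b : Hom W B) :
  is_pullback f g p1 p2 -> f ⊚ a = g ⊚ b -> exists u : Hom W P, p1 ⊚ u = a /\ p2 ⊚ u = b.
Proof. intros [_ H] Eab. destruct (H W a b Eab) as [u [Hu _]]. exists u. exact Hu. Qed.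

Lemma pullback_ext {A B D P W : C} (f : Hom A D) (g : Hom B D) (p1 : Hom P A)
  (p2 : Hom P B) (u v : Hom W P) :
  is_pullback f g p1 p2 -> p1 ⊚ u = p1 ⊚ v -> p2 ⊚ u = p2 ⊚ v -> u = v.
Proof.
  intros [E H] E1 E2.
  destruct (H W (p1 ⊚ v) (p2 ⊚ v)) as [w [_ Hw]].
  { rewrite !comp_assoc, E. reflexivity. }
  rewrite (Hw u), (Hw v); auto.
Qed.

Lemma kernel_pair_diagonal {A D P : C} (f : Hom A D) (p1 p2 : Hom P A) :
  is_kernel_pair p1 p2 f -> exists d : Hom A P, p1 ⊚ d = idm A /\ p2 ⊚ d = idm A.
Proof. intros Hkp. exact (pullback_lift (idm A) (idm A) Hkp eq_refl). Qed.

Lemma product_ext {P A B W : C} (p1 : Hom P A) (p2 : Hom P B) (u v : Hom W P) :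
  is_product p1 p2 -> p1 ⊚ u = p1 ⊚ v -> p2 ⊚ u = p2 ⊚ v -> u = v.
Proof.
  intros H E1 E2. destruct (H W (p1 ⊚ v) (p2 ⊚ v)) as [w [_ Hw]].
  rewrite (Hw u), (Hw v); auto.
Qed.

Lemma product_lift {P A B W : C} (p1 : Hom P A) (p2 : Hom P B) (a : Hom W A) (b : Hom W B) :
  is_product p1 p2 -> exists u : Hom W P, p1 ⊚ u = a /\ p2 ⊚ u = b.
Proof. intros H. destruct (H W a b) as [u [Hu _]]. exists u. exact Hu. Qed.

Lemma coproduct_ext {X Y S W : C} (i1 : Hom X S) (i2 : Hom Y S) (u v : Hom S W) :
  is_coproduct i1 i2 -> u ⊚ i1 = v ⊚ i1 -> u ⊚ i2 = v ⊚ i2 -> u = v.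
Proof.
  intros H E1 E2. destruct (H W (v ⊚ i1) (v ⊚ i2)) as [w [_ Hw]].
  rewrite (Hw u), (Hw v); auto.
Qed.

Lemma coequalizer_pushout {R Y I Z P : C} {r1 r2 : Hom R Y} {e : Hom Y I} {n : Hom Y Z}
  {q : Hom Z P} {m' : Hom I P} :
  is_coequalizer r1 r2 e -> is_coequalizer (n ⊚ r1) (n ⊚ r2) q -> m' ⊚ e = q ⊚ n ->
  is_pushout n e m' q.
Proof.
  intros He [_ Hq] Hm'. split; [symmetry; exact Hm'|].
  intros W b d Hbd.
  destruct (Hq W b) as [u [Hu Huniq]].
  { rewrite !comp_assoc, Hbd, <- !comp_assoc, (proj1 He). reflexivity. }
  exists u. split; [split|].
  - apply (coequalizer_epi He). rewrite <- comp_assoc, Hm', comp_assoc, Hu. exact Hbd.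
  - exact Hu.
  - intros v [_ Hv]. exact (Huniq v Hv).
Qed.

Hypothesis Hterm : has_terminal C.
Hypothesis Hpb : has_pullbacks C.

Lemma product_exists (A B : C) :
  exists (P : C) (p1 : Hom P A) (p2 : Hom P B), is_product p1 p2.
Proof.
  destruct Hterm as [T HT].
  destruct (HT A) as [a _]. destruct (HT B) as [b _].
  destruct (Hpb _ _ _ a b) as [P [p1 [p2 [_ H]]]]. exists P, p1, p2.
  intros W x y. destruct (HT W) as [w Hw].
  apply H. rewrite (Hw (a ⊚ x)), (Hw (b ⊚ y)). reflexivity.
Qed.

Lemma equalizer_exists {A W : C} (u v : Hom A W) :
  exists (E : C) (i : Hom E A), u ⊚ i = v ⊚ i /\ is_mono i /\
    forall (T : C) (x : Hom T A), u ⊚ x = v ⊚ x -> exists y : Hom T E, i ⊚ y = x.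
Proof.
  destruct (product_exists A W) as [P [p1 [p2 HP]]].
  destruct (product_lift (idm A) u HP) as [a [Ha1 Ha2]].
  destruct (product_lift (idm A) v HP) as [b [Hb1 Hb2]].
  destruct (Hpb _ _ _ a b) as [E [e1 [e2 He]]].
  pose proof (proj1 He) as Eab.
  assert (Ee : e1 = e2).
  { rewrite <- (comp_id_l _ _ _ e1), <- Ha1, <- comp_assoc, Eab, comp_assoc, Hb1.
    apply comp_id_l. }
  exists E, e1. split; [|split].
  - rewrite <- Ha2, <- Hb2, <- !comp_assoc, Eab, Ee. reflexivity.
  - intros T x y Hxy. apply (pullback_ext x y He); [exact Hxy|]. rewrite <- Ee. exact Hxy.
  - intros T x Hx.
    destruct (pullback_lift x x He) as [y [Hy _]]; [|exists y; exact Hy].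
    apply (product_ext _ _ HP); rewrite !comp_assoc.
    + rewrite Ha1, Hb1. reflexivity.
    + rewrite Ha2, Hb2. exact Hx.
Qed.

Hypothesis Hpt : pointed C.

Lemma zero_mor_exists (X Y : C) : exists z : Hom X Y, is_zero_mor z.
Proof.
  destruct Hpt as [Z [HZi HZt]]. destruct (HZi Y) as [v _]. destruct (HZt X) as [u _].
  exists (v ⊚ u), Z, u, v. split; [split|]; auto.
Qed.

Lemma zero_of_mono_postcomp {T X Y : C} {m : Hom X Y} {x : Hom T X} :
  is_mono m -> is_zero_mor (m ⊚ x) -> is_zero_mor x.
Proof.
  intros Hm Hmx. destruct (zero_mor_exists T X) as [z Hz].
  replace x with z; [exact Hz|].
  apply Hm, zero_mor_unique; [apply zero_mor_postcomp, Hz|exact Hmx].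
Qed.

Lemma zero_of_epi_precomp {T X Y : C} {p : Hom T X} {x : Hom X Y} :
  is_epi p -> is_zero_mor (x ⊚ p) -> is_zero_mor x.
Proof.
  intros Hp Hxp. destruct (zero_mor_exists X Y) as [z Hz].
  replace x with z; [exact Hz|].
  apply Hp, zero_mor_unique; [apply zero_mor_precomp, Hz|exact Hxp].
Qed.

Lemma kernel_exists {X Y : C} (f : Hom X Y) : exists (K : C) (k : Hom K X), is_kernel k f.
Proof.
  destruct Hpt as [Z HZ]. pose proof HZ as [HZi HZt]. destruct (HZi Y) as [z _].
  destruct (Hpb _ _ _ z f) as [K [kz [k [E Hk]]]]. exists K, k. split.
  - rewrite <- E. apply zero_mor_postcomp, zero_mor_to_zero_object, HZ.
  - intros W g Hg. destruct (HZt W) as [a _].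
    destruct (Hk W a g) as [u [[_ Hu] Huniq]].
    { apply zero_mor_unique; [apply zero_mor_postcomp, zero_mor_to_zero_object, HZ|exact Hg]. }
    exists u. split; [exact Hu|].
    intros v Hv. apply Huniq. split; [|exact Hv].
    apply zero_mor_unique; apply zero_mor_to_zero_object, HZ.
Qed.

Lemma kernel_pullback {Z K A Y : C} (z : Hom Z Y) (p : Hom A Y) (k : Hom K A) :
  is_zero_object Z -> is_kernel k p -> exists kz : Hom K Z, is_pullback z p kz k.
Proof.
  intros HZ [Hk0 Hk]. destruct (proj2 HZ K) as [kz _]. exists kz. split.
  - apply zero_mor_unique; [apply zero_mor_postcomp, zero_mor_to_zero_object, HZ|exact Hk0].
  - intros W a b Hab.
    destruct (Hk W b) as [u [Hu Huniq]].
    { rewrite <- Hab. apply zero_mor_postcomp, zero_mor_to_zero_object, HZ. }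
    exists u. split; [split|].
    + apply zero_mor_unique; apply zero_mor_to_zero_object, HZ.
    + exact Hu.
    + intros v [_ Hv]. exact (Huniq v Hv).
Qed.

Hypothesis HP : protomodular C.

(* The split short five lemma. *)
Lemma mono_containing_section_and_kernel_iso {Y A K E : C} (p : Hom A Y) (s : Hom Y A)
  (k : Hom K A) (i : Hom E A) (s' : Hom Y E) (k' : Hom K E) :
  p ⊚ s = idm Y -> is_kernel k p -> is_mono i -> i ⊚ s' = s -> i ⊚ k' = k -> is_iso i.
Proof.
  intros Hps Hk Hi Hs Hk'.
  destruct Hpt as [Z HZ]. destruct (proj1 HZ Y) as [z _].
  destruct (kernel_pullback z HZ Hk) as [kz Hpb_k].
  assert (Hps' : (p ⊚ i) ⊚ s' = idm Y) by (rewrite <- comp_assoc, Hs; exact Hps).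
  refine (HP (f := z) (pa2 := k') (k := idm K) s' i Hps' Hps eq_refl Hs _ Hpb_k _ _ _).
  - destruct Hpb_k as [E0 H]. split.
    + rewrite E0, <- Hk'. apply comp_assoc.
    + intros W a b Hab.
      destruct (H W a (i ⊚ b)) as [u [[H1 H2] Hu]].
      { rewrite Hab. symmetry. apply comp_assoc. }
      exists u. split; [split|].
      * exact H1.
      * apply Hi. rewrite comp_assoc, Hk'. exact H2.
      * intros v [Hv1 Hv2]. apply Hu. split; [exact Hv1|].
        rewrite <- Hk', <- comp_assoc, Hv2. reflexivity.
  - apply comp_id_r.
  - rewrite comp_id_r. symmetry. exact Hk'.
  - exists (idm K). split; apply comp_id_l.
Qed.

Lemma section_and_kernel_jointly_epic {Y A K W : C} (p : Hom A Y) (s : Hom Y A)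
  (k : Hom K A) (u v : Hom A W) :
  p ⊚ s = idm Y -> is_kernel k p -> u ⊚ s = v ⊚ s -> u ⊚ k = v ⊚ k -> u = v.
Proof.
  intros Hps Hk Hs Hku.
  destruct (equalizer_exists u v) as [E [i [Ei [Hi Hlift]]]].
  destruct (Hlift _ s Hs) as [s' Hs']. destruct (Hlift _ k Hku) as [k' Hk'].
  destruct (mono_containing_section_and_kernel_iso s' k' Hps Hk Hi Hs' Hk') as [j [_ Hj]].
  rewrite <- (comp_id_r _ _ _ u), <- (comp_id_r _ _ _ v), <- Hj, !comp_assoc, Ei.
  reflexivity.
Qed.

Lemma trivial_kernel_mono {D W : C} (d : Hom D W) :
  (forall (T : C) (x : Hom T D), is_zero_mor (d ⊚ x) -> is_zero_mor x) -> is_mono d.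
Proof.
  intros Htk.
  destruct (Hpb _ _ _ d d) as [R [r1 [r2 HR]]].
  destruct (kernel_pair_diagonal HR) as [dl [Hd1 Hd2]].
  destruct (kernel_exists r1) as [K [k Hk]].
  assert (E : r1 = r2).
  { apply (section_and_kernel_jointly_epic dl _ _ Hd1 Hk); [rewrite Hd1, Hd2; reflexivity|].
    apply zero_mor_unique; [exact (proj1 Hk)|].
    apply Htk. rewrite comp_assoc, <- (proj1 HR), <- comp_assoc.
    apply zero_mor_postcomp, Hk. }
  intros T a b Hab. destruct (pullback_lift a b HR Hab) as [w [Hw1 Hw2]].
  rewrite <- Hw1, <- Hw2, E. reflexivity.
Qed.

Lemma regular_epi_cokernel_of_kernel {A D W K : C} (e : Hom A D) (k : Hom K A)
  (h : Hom A W) :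
  is_regular_epi e -> is_kernel k e -> is_zero_mor (h ⊚ k) -> exists d : Hom D W, d ⊚ e = h.
Proof.
  intros [A0 [a [b [Eab Hcoeq]]]] Hk Hhk.
  destruct (Hpb _ _ _ e e) as [R [r1 [r2 HR]]].
  assert (Hr : h ⊚ r1 = h ⊚ r2).
  { destruct (kernel_pair_diagonal HR) as [dl [Hd1 Hd2]].
    destruct (kernel_exists r1) as [L [l Hl]].
    apply (section_and_kernel_jointly_epic dl _ _ Hd1 Hl).
    { rewrite <- !comp_assoc, Hd1, Hd2. reflexivity. }
    destruct (proj2 Hk L (r2 ⊚ l)) as [y [Hy _]].
    { rewrite comp_assoc, <- (proj1 HR), <- comp_assoc. apply zero_mor_postcomp, Hl. }
    apply zero_mor_unique.
    - rewrite <- comp_assoc. apply zero_mor_postcomp, Hl.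
    - rewrite <- comp_assoc, <- Hy, comp_assoc. apply zero_mor_precomp, Hhk. }
  destruct (pullback_lift a b HR Eab) as [w [Hw1 Hw2]].
  destruct (Hcoeq W h) as [d [Hd _]]; [|exists d; exact Hd].
  rewrite <- Hw1, <- Hw2, !comp_assoc, Hr. reflexivity.
Qed.

(* Elements of T are pairs (x, x') of related elements with s2 x = s2 x'.  Those
   for which s1 x' is related to s1 x form a subobject of T containing the diagonal
   and the kernel of t1, hence all of T by the split short five lemma. *)
Lemma reflexive_relation_difunctional {S X T : C} (s1 s2 : Hom S X) (r : Hom X S)
  (t1 t2 : Hom T S) :
  jointly_monic s1 s2 -> s1 ⊚ r = idm X -> s2 ⊚ r = idm X -> is_kernel_pair t1 t2 s2 ->
  exists w : Hom T S, s1 ⊚ w = s1 ⊚ t2 /\ s2 ⊚ w = s1 ⊚ t1.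
Proof.
  intros Hjm Hr1 Hr2 HT.
  destruct (product_exists X X) as [P [pi1 [pi2 HPr]]].
  destruct (product_lift s1 s2 HPr) as [sg [Hsg1 Hsg2]].
  assert (Hsg : is_mono sg).
  { intros W a b Hab. apply Hjm.
    - rewrite <- Hsg1, <- !comp_assoc, Hab. reflexivity.
    - rewrite <- Hsg2, <- !comp_assoc, Hab. reflexivity. }
  destruct (product_lift (s1 ⊚ t2) (s1 ⊚ t1) HPr) as [tau [Htau1 Htau2]].
  destruct (Hpb _ _ _ sg tau) as [E [e1 [e2 HE]]].
  assert (He2 : is_mono e2).
  { intros W a b Hab. apply (pullback_ext a b HE); [|exact Hab].
    apply Hsg. rewrite !comp_assoc, (proj1 HE), <- !comp_assoc, Hab. reflexivity. }
  destruct (kernel_pair_diagonal HT) as [dg [Hdg1 Hdg2]].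
  destruct (kernel_exists t1) as [K [k Hk]].
  destruct (pullback_lift (r ⊚ s1) dg HE) as [s' [_ Hs']].
  { apply (product_ext _ _ HPr).
    - rewrite (comp_assoc_eq Hsg1), (comp_assoc_eq Htau1), (comp_assoc_eq Hr1), comp_id_l,
        <- comp_assoc, Hdg2, comp_id_r.
      reflexivity.
    - rewrite (comp_assoc_eq Hsg2), (comp_assoc_eq Htau2), (comp_assoc_eq Hr2), comp_id_l,
        <- comp_assoc, Hdg1, comp_id_r.
      reflexivity. }
  destruct (pullback_lift (t2 ⊚ k) k HE) as [k' [_ Hk']].
  { apply (product_ext _ _ HPr).
    - rewrite (comp_assoc_eq Hsg1), (comp_assoc_eq Htau1). apply comp_assoc.
    - rewrite (comp_assoc_eq Hsg2), (comp_assoc_eq Htau2), comp_assoc, <- (proj1 HT).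
      apply zero_mor_unique; rewrite <- comp_assoc; apply zero_mor_postcomp, Hk. }
  destruct (mono_containing_section_and_kernel_iso s' k' Hdg1 Hk He2 Hs' Hk') as [j [_ Hj]].
  assert (Hw : sg ⊚ (e1 ⊚ j) = tau).
  { rewrite comp_assoc, (proj1 HE), <- comp_assoc, Hj. apply comp_id_r. }
  exists (e1 ⊚ j). split.
  - rewrite <- Htau1, <- Hw. symmetry. apply (comp_assoc_eq Hsg1).
  - rewrite <- Htau2, <- Hw. symmetry. apply (comp_assoc_eq Hsg2).
Qed.

(* The Mal'tsev property of protomodular categories. *)
Lemma reflexive_relation_equivalence {S X : C} (s1 s2 : Hom S X) (r : Hom X S) :
  jointly_monic s1 s2 -> s1 ⊚ r = idm X -> s2 ⊚ r = idm X -> is_equivalence_relation s1 s2.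
Proof.
  intros Hjm Hr1 Hr2.
  destruct (Hpb _ _ _ s2 s2) as [T [t1 [t2 HT]]].
  destruct (reflexive_relation_difunctional r Hjm Hr1 Hr2 HT) as [w [Hw1 Hw2]].
  destruct (pullback_lift (idm S) (r ⊚ s2) HT) as [c [Hc1 Hc2]].
  { rewrite comp_assoc, Hr2, comp_id_l, comp_id_r. reflexivity. }
  set (sym := w ⊚ c).
  assert (Hsym1 : s1 ⊚ sym = s2).
  { unfold sym. rewrite (comp_assoc_eq Hw1), <- comp_assoc, Hc2, comp_assoc, Hr1.
    apply comp_id_l. }
  assert (Hsym2 : s2 ⊚ sym = s1).
  { unfold sym. rewrite (comp_assoc_eq Hw2), <- comp_assoc, Hc1. apply comp_id_r. }
  split; [exact Hjm|].
  split; [exists r; split; assumption|].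
  split; [exists sym; split; assumption|].
  intros P p1 p2 [EP _].
  destruct (pullback_lift p1 (sym ⊚ p2) HT) as [c2 [Hc21 Hc22]].
  { rewrite (comp_assoc_eq Hsym2). exact EP. }
  exists (sym ⊚ (w ⊚ c2)). split.
  - rewrite (comp_assoc_eq Hsym1), (comp_assoc_eq Hw2), <- comp_assoc, Hc21. reflexivity.
  - rewrite (comp_assoc_eq Hsym2), (comp_assoc_eq Hw1), <- comp_assoc, Hc22,
      (comp_assoc_eq Hsym1).
    reflexivity.
Qed.

Hypothesis Hcq : coequalizers_of_kernel_pairs C.
Hypothesis Hst : regular_epis_pullback_stable C.

Lemma image_factorization {A B : C} (f : Hom A B) :
  exists (I : C) (e : Hom A I) (m : Hom I B), m ⊚ e = f /\ is_mono m /\ is_regular_epi e.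
Proof.
  destruct (Hpb _ _ _ f f) as [K [k1 [k2 HK]]].
  destruct (Hcq HK) as [I [e He]].
  assert (Hre : is_regular_epi e) by (exists K, k1, k2; exact He).
  destruct (proj2 He B f (proj1 HK)) as [m [Hm _]].
  exists I, e, m. split; [exact Hm|split; [|exact Hre]].
  destruct (Hpb _ _ _ m m) as [L [u [v HL]]].
  assert (Euv : u = v).
  { destruct (Hpb _ _ _ u e) as [P [p1 [p2 HP1]]].
    destruct (Hpb _ _ _ (v ⊚ p1) e) as [Q [q1 [q2 HQ]]].
    apply (epi_comp (regular_epi_epi (Hst HQ Hre)) (regular_epi_epi (Hst HP1 Hre))).
    assert (Hx : e ⊚ (p2 ⊚ q1) = u ⊚ (p1 ⊚ q1))
      by (rewrite !comp_assoc, (proj1 HP1); reflexivity).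
    assert (Hy : e ⊚ q2 = v ⊚ (p1 ⊚ q1)) by (rewrite comp_assoc, (proj1 HQ); reflexivity).
    destruct (pullback_lift (p2 ⊚ q1) q2 HK) as [w [Hw1 Hw2]].
    { rewrite <- Hm, <- !comp_assoc, Hx, Hy, !comp_assoc, (proj1 HL). reflexivity. }
    rewrite <- Hx, <- Hy, <- Hw1, <- Hw2, !comp_assoc, (proj1 He). reflexivity. }
  intros T a b Hab. destruct (pullback_lift a b HL Hab) as [w [Hw1 Hw2]].
  rewrite <- Hw1, <- Hw2, Euv. reflexivity.
Qed.

Hypothesis Hex : forall (R X : C) (d1 d2 : Hom R X),
  is_equivalence_relation d1 d2 -> is_effective d1 d2.
Hypothesis Hcop : has_binary_coproducts C.

(* The relation generated by a and b is the image of [(1, 1), (a, b)] : Z + R -> Z x Z;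
   being reflexive, it is an effective equivalence relation. *)
Lemma coequalizer_exists {R Z : C} (a b : Hom R Z) :
  exists (Q : C) (q : Hom Z Q), is_coequalizer a b q.
Proof.
  destruct (product_exists Z Z) as [P [pi1 [pi2 HPr]]].
  destruct (product_lift (idm Z) (idm Z) HPr) as [diag [Hdiag1 Hdiag2]].
  destruct (product_lift a b HPr) as [ab [Hab1 Hab2]].
  destruct (Hcop Z R) as [S [i1 [i2 Hco]]].
  destruct (Hco P diag ab) as [phi [[Hphi1 Hphi2] _]].
  destruct (image_factorization phi) as [I [eps [sg [Hsg_eps [Hsg Heps]]]]].
  assert (Hsgi1 : sg ⊚ (eps ⊚ i1) = diag) by (rewrite (comp_assoc_eq Hsg_eps); exact Hphi1).
  assert (Hsgi2 : sg ⊚ (eps ⊚ i2) = ab) by (rewrite (comp_assoc_eq Hsg_eps); exact Hphi2).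
  assert (Hjm : jointly_monic (pi1 ⊚ sg) (pi2 ⊚ sg)).
  { intros W x y E1 E2. apply Hsg, (product_ext _ _ HPr); rewrite !comp_assoc; assumption. }
  assert (Hr1 : (pi1 ⊚ sg) ⊚ (eps ⊚ i1) = idm Z)
    by (rewrite <- comp_assoc, Hsgi1; exact Hdiag1).
  assert (Hr2 : (pi2 ⊚ sg) ⊚ (eps ⊚ i1) = idm Z)
    by (rewrite <- comp_assoc, Hsgi1; exact Hdiag2).
  destruct (Hex (reflexive_relation_equivalence (eps ⊚ i1) Hjm Hr1 Hr2)) as [Y [h Hkp]].
  destruct (Hcq Hkp) as [Q [q [Eq Hq]]].
  assert (Ha : (pi1 ⊚ sg) ⊚ (eps ⊚ i2) = a) by (rewrite <- comp_assoc, Hsgi2; exact Hab1).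
  assert (Hb : (pi2 ⊚ sg) ⊚ (eps ⊚ i2) = b) by (rewrite <- comp_assoc, Hsgi2; exact Hab2).
  exists Q, q. split.
  - rewrite <- Ha, <- Hb, !(comp_assoc _ _ _ _ _ (eps ⊚ i2)), Eq. reflexivity.
  - intros W c Hc. apply Hq.
    apply (regular_epi_epi Heps), (coproduct_ext _ _ Hco); rewrite <- !comp_assoc.
    + rewrite Hsgi1, Hdiag1, Hdiag2. reflexivity.
    + rewrite Hsgi2, Hab1, Hab2. exact Hc.
Qed.

Lemma pushouts_of_normal_monos_mono_of_normal_monos_compose :
  normal_monos_compose -> pushouts_of_normal_monos_mono.
Proof.
  intros Hcomp A B D P m e m' e' Hm He [_ Hpo].
  assert (Hmm : is_mono m) by exact (normal_mono_mono Hm).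
  destruct (kernel_exists e) as [K [k Hk]].
  destruct (Hcomp _ _ _ k m (ex_intro _ D (ex_intro _ e Hk)) Hm) as [W [g Hg]].
  destruct (regular_epi_cokernel_of_kernel (g ⊚ m) He Hk) as [d Hd].
  { rewrite <- comp_assoc. exact (proj1 Hg). }
  assert (Hdm : is_mono d).
  { apply trivial_kernel_mono. intros T x Hx.
    destruct (Hpb _ _ _ x e) as [Q [p1 [p2 HQ]]].
    apply (zero_of_epi_precomp (regular_epi_epi (Hst HQ He))).
    destruct (proj2 Hg Q (m ⊚ p2)) as [y [Hy _]].
    { rewrite comp_assoc, <- Hd, <- comp_assoc, <- (proj1 HQ), comp_assoc.
      apply zero_mor_precomp, Hx. }
    assert (Hp2 : p2 = k ⊚ y) by (apply Hmm; rewrite comp_assoc; symmetry; exact Hy).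
    rewrite (proj1 HQ), Hp2, comp_assoc. apply zero_mor_precomp, Hk. }
  destruct (Hpo W g d (eq_sym Hd)) as [u [[Hu _] _]].
  rewrite <- Hu in Hdm. exact (mono_of_mono_comp Hdm).
Qed.

Lemma normal_monos_compose_of_pushouts_of_normal_monos_mono :
  pushouts_of_normal_monos_mono -> normal_monos_compose.
Proof.
  intros Hpush X Y Z m n [V [f Hf]] [U [g Hg]].
  destruct (Hpb _ _ _ f f) as [R [r1 [r2 HR]]].
  destruct (Hcq HR) as [I [e He]].
  destruct (proj2 He V f (proj1 HR)) as [i [Hi _]].
  destruct (coequalizer_exists (n ⊚ r1) (n ⊚ r2)) as [P [q Hq]].
  destruct (proj2 He P (q ⊚ n)) as [m' [Hm' _]].
  { rewrite <- !comp_assoc. exact (proj1 Hq). }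
  assert (Hm'mono : is_mono m').
  { apply (Hpush _ _ _ _ n e m' q).
    - exists U, g. exact Hg.
    - exists R, r1, r2. exact He.
    - exact (coequalizer_pushout He Hq Hm'). }
  assert (Hem : is_zero_mor (e ⊚ m)).
  { destruct (zero_mor_exists X Y) as [z Hz].
    destruct (pullback_lift m z HR) as [w [Hw1 Hw2]].
    { apply zero_mor_unique; [exact (proj1 Hf)|apply zero_mor_postcomp, Hz]. }
    rewrite <- Hw1, comp_assoc, (proj1 He), <- comp_assoc, Hw2. apply zero_mor_postcomp, Hz. }
  destruct (proj2 Hq U g) as [gq [Hgq _]].
  { apply zero_mor_unique; rewrite comp_assoc; apply zero_mor_precomp, Hg. }
  exists P, q. split.
  - rewrite comp_assoc, <- Hm', <- comp_assoc. apply zero_mor_postcomp, Hem.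
  - intros W x Hx.
    destruct (proj2 Hg W x) as [y [Hy _]].
    { rewrite <- Hgq, <- comp_assoc. apply zero_mor_postcomp, Hx. }
    destruct (proj2 Hf W y) as [w [Hw _]].
    { rewrite <- Hi, <- comp_assoc. apply zero_mor_postcomp.
      apply (zero_of_mono_postcomp Hm'mono).
      rewrite (comp_assoc_eq Hm'), <- comp_assoc, Hy. exact Hx. }
    exists w. split.
    + rewrite <- comp_assoc, Hw. exact Hy.
    + intros v Hv. apply (mono_comp (kernel_mono Hf) (kernel_mono Hg)).
      rewrite Hv, <- comp_assoc, Hw. symmetry. exact Hy.
Qed.

End SemiAbelian.

Theorem mainTheorem15 (C : Category) (HC : semi_abelian C) :
  (forall (X Y Z : C) (m : Hom X Y) (n : Hom Y Z),
      is_normal_mono m -> is_normal_mono n -> is_normal_mono (n ⊚ m))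
  <->
  (forall (A B D P : C) (m : Hom A B) (e : Hom A D) (m' : Hom D P) (e' : Hom B P),
      is_normal_mono m -> is_regular_epi e -> is_pushout m e m' e' ->
      is_mono m').
Proof.
  destruct HC as [Hpt [[[[Hterm Hpb] [Hcq Hst]] Hex] [HP Hcop]]].
  split.
  - apply pushouts_of_normal_monos_mono_of_normal_monos_compose; assumption.
  - apply normal_monos_compose_of_pushouts_of_normal_monos_mono; assumption.
Qed.
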